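(* Let $n,\ell\in\mathbb Z$ with $n>2\ell\ge6$, let $q$ be a primitive $2\ell$-th root of unity in a field $k$, and let $w_1,w_2$ be non-integral. Then for every half-diagram $D$ in the standard basis of $\mathcal S_n(-n+2\ell)$ the hook product $h_3(D)$ is defined (its reduced expression specialises without a vanishing denominator), and $h_3(D)\neq0$ for some such $D$.
   Context: Setting: symplectic blob algebra $b_n^x(-[2],-[w_1],-[w_2],[w_1+1],[w_2+1],\kappa_{LR})$ (generators $e,e_1,\dots,e_{n-1},f$; basis of Temperley–Lieb diagrams whose lines may carry a left blob if deformable to the left edge without crossing lines and a right blob if deformable to the right edge). Quantum numbers: $[x]=\frac{q^x-q^{-x}}{q-q^{-1}}$; $w_i$ are formal, with $Q_i=q^{w_i}$ and $[w_i+x]=\frac{Q_iq^x-Q_i^{-1}q^{-x}}{q-q^{-1}}$; ''$w_i$ non-integral'' means $Q_i\notin\pm q^{\mathbb Z}$. Falling factorials $[w]_\ell!=[w][w-1]\cdots[w-\ell+1]$, $[\ell]!=[1][2]\cdots[\ell]$. The cell module $\mathcal S_n(-n+2\ell)$ has basis the half-diagrams $D$: $n$ vertices on a top edge, $\ell$ non-crossing arcs joining pairs of top vertices and $n-2\ell$ undecorated non-crossing propagating lines running to the bottom; an arc may carry a left blob if it can be deformed to touch the left edge without crossing lines, or a right blob if it can be deformed to the right edge. Number top vertices $1,\dots,n$ left to right and the bottom ends of propagating lines $n+1,\dots,2n-2\ell$ from right to left; each line $g$ is then $(a,a+2b+1)$ with $b\ge0$. Define $h_3(g)=[b+1]$ if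 $g$ is an undecorated arc; $1$ if $g$ is propagating and $a\equiv1,\dots,2\ell \pmod{4\ell}$; $-1$ if $g$ is propagating and $a\equiv 2\ell+1,\dots,4\ell\pmod{4\ell}$; $\left[\frac{a+2b+1}{2}\right]\left[\frac{2w_1-a+1}{2}\right]$ if $g$ has a left blob; $\left[\frac{n-a+1}{2}\right]\left[\frac{2w_2-n+a+2b+1}{2}\right]$ if $g$ has a right blob. Set $h_3(D)=[\ell]!\,[w_1]_\ell!\,[w_2]_\ell!\big/\prod_{g\in D}h_3(g)$, computed as a rational function in indeterminates $q,Q_1,Q_2$ with all cancellations performed before specialising $q$ (and $Q_1,Q_2$). *)

From HB Require Import structures.
From mathcomp Require Import all_boot all_order all_algebra.
From mathcomp Require Import fraction.
From mathcomp Require Import mpoly.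
Set Implicit Arguments. Unset Strict Implicit. Unset Printing Implicit Defensive.
Import Order.TTheory GRing.Theory Num.Theory.
Local Open Scope ring_scope.

(* A line g = (a, c) is stored with its kind; a is its smaller endpoint  *)
(* (a top vertex, numbered 1..n left to right) and c its other endpoint: *)
(* a top vertex for an arc, the bottom label n+1..2n-2l (numbered right  *)
(* to left) for a propagating line.  With c = a+2b+1, b = (c-a-1)/2.    *)
Inductive line_kind := Undec | LBlob | RBlob | Propag.

Record line := Line { la : nat; lc : nat; lk : line_kind }.

Definition is_prop (g : line) : bool := if lk g is Propag then true else false.
Definition is_arc (g : line) : bool := ~~ is_prop g.

Definition touches (v : nat) (g : line) : bool :=
  (la g == v) || (is_arc g && (lc g == v)).

Definition encloses (h g : line) : bool :=
  [&& is_arc h, (la h < la g)%N & (lc g < lc h)%N].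

Local Open Scope nat_scope.
Definition half_diagram (n l : nat) (D : seq line) : bool :=
  [&& count is_arc D == l,
      count is_prop D == n - 2 * l,
      all (fun v => count (touches v) D == 1) (iota 1 n),
      all (fun g => (1 <= la g) &&
             (if is_prop g then
                (la g <= n) &&
                (lc g == n + count (fun h => is_prop h && (la g <= la h)) D)
              else (la g < lc g) && (lc g <= n))) D,
      (* non-crossing *)
      all (fun g => all (fun h =>
             is_arc g ==>
               (if is_prop h then ~~ ((la g < la h) && (la h < lc g))
                else ~~ [&& la g < la h, la h < lc g & lc g < lc h])) D) D
    & (* blobs only on arcs deformable to the corresponding edge *)
      all (fun g =>
        match lk g with
        | LBlob => all (fun h => (is_prop h ==> (la g < la h)) && ~~ encloses h g) D
        | RBlob => all (fun h => (is_prop h ==> (la h < la g)) && ~~ encloses h g) D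
        | _ => true
        end) D].

Local Open Scope ring_scope.
Section RatFun.
Variable k : fieldType.

Definition ratfun := {fraction {mpoly k[3]}}.

Definition var (i : nat) : ratfun := FracField.tofrac ('X_(inord i) : {mpoly k[3]}).
Definition qv : ratfun := var 0.
Definition Q1v : ratfun := var 1.
Definition Q2v : ratfun := var 2.

Definition qint (x : int) : ratfun := (qv ^ x - qv ^ (- x)) / (qv - qv^-1).
(* [w + x] with Q = q^w *)
Definition qwint (Q : ratfun) (x : int) : ratfun :=
  (Q * qv ^ x - Q^-1 * qv ^ (- x)) / (qv - qv^-1).

Definition qfact (l : nat) : ratfun := \prod_(i < l) qint (i.+1)%:Z.
Definition qwfall (Q : ratfun) (l : nat) : ratfun := \prod_(i < l) qwint Q (- (i%:Z)).

Definition h3_line (n l : nat) (g : line) : ratfun :=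
  let a := la g in
  let b := (lc g - a - 1)./2 in
  match lk g with
  | Undec => qint (b.+1)%:Z
  | Propag => if ((a - 1) %% (4 * l) < 2 * l)%N then 1 else -1
  | LBlob => qint ((a + 2 * b + 1)./2)%:Z * qwint Q1v (- ((a - 1)./2)%:Z)
  | RBlob => qint ((n - a + 1)./2)%:Z * qwint Q2v (- ((n - (a + 2 * b + 1))./2)%:Z)
  end.

Definition h3 (n l : nat) (D : seq line) : ratfun :=
  qfact l * qwfall Q1v l * qwfall Q2v l / \prod_(g <- D) h3_line n l g.

Definition point (q Q1 Q2 : k) : 'I_3 -> k := fun i => nth 0 [:: q; Q1; Q2] i.

(* f is defined at p (it has a representation P/R with R(p) <> 0, i.e.   *)
(* the denominator of its reduced form does not vanish at p) and its     *)
(* specialisation at p is x.                                             *)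
Definition specializes_to (f : ratfun) (p : 'I_3 -> k) (x : k) : Prop :=
  exists P R : {mpoly k[3]},
    R.@[p] != 0 /\ f = FracField.tofrac P / FracField.tofrac R /\ x = P.@[p] / R.@[p].

(* w non-integral: Q = q^w is a unit not in +- q^Z *)
Definition nonintegral (q Q : k) : Prop :=
  Q != 0 /\ forall m : int, Q != q ^ m /\ Q != - q ^ m.

End RatFun.

(* At a primitive 2l-th root of unity [m] vanishes exactly when l divides m, while every
   factor [w_i + x] stays a unit because w_i is non-integral.  An arc of a half-diagram
   forces an interval of top vertices (the vertices it encloses, extended to the edge when
   it carries a blob) to be endpoints of arcs; as there are only 2l of those, every
   quantum integer [m] in the denominator of h3(D) has 0 < m <= l, and an arc with m = l
   spans all of them, so there is at most one such arc.  Its factor [l] cancels the [l]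
   of [l]!, and what remains specialises to a unit.  The diagram made of the left-blobbed
   arcs (2i+1, 2i+2) has such an arc, (2l-1, 2l), hence a nonzero value. *)

From HB Require Import structures.
From mathcomp Require Import all_boot all_order all_algebra.
From mathcomp Require Import fraction mpoly.
From mathcomp Require Import zify.
Import GRing.Theory.
Set Implicit Arguments. Unset Strict Implicit.

Lemma line_kind_eq_dec : comparable line_kind.
Proof. move=> x y; rewrite /decidable; decide equality. Qed.
HB.instance Definition _ := comparableMixin line_kind_eq_dec.

Lemma line_eq_dec : comparable line.
Proof. move=> x y; rewrite /decidable; decide equality; exact: eq_comparable. Qed.
HB.instance Definition _ := comparableMixin line_eq_dec.

Definition hook_length (n : nat) (g : line) : nat :=
  let a := la g in let b := (lc g - a - 1)./2 in
  match lk g with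
  | Undec => b.+1
  | LBlob => (a + 2 * b + 1)./2
  | RBlob => (n - a + 1)./2
  | Propag => 0
  end.

Definition critical (n l : nat) (g : line) : bool := is_arc g && (hook_length n g == l).

(* For an arc g, every vertex of [span_lo g, span_hi n g] is an arc endpoint: a blobbed
   arc can be deformed to its edge, so no propagating line starts between it and that edge. *)
Definition span_lo (g : line) : nat := if lk g is LBlob then 1 else la g.
Definition span_hi (n : nat) (g : line) : nat := if lk g is RBlob then n else lc g.

Lemma span_loE g : lk g != LBlob -> span_lo g = la g.
Proof. by rewrite /span_lo; case: (lk g); rewrite ?eqxx. Qed.

Lemma span_hiE n g : lk g != RBlob -> span_hi n g = lc g.
Proof. by rewrite /span_hi; case: (lk g); rewrite ?eqxx. Qed.

Lemma count_orb (T : Type) (a b : pred T) s :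
  count (fun x => a x || b x) s <= count a s + count b s.
Proof. by elim: s => //= x s IH; case: (a x); case: (b x) => /=; lia. Qed.

Lemma count_arc_vertex_le (s : seq line) (r : seq nat) : uniq r ->
  count (fun v => has (fun h => is_arc h && touches v h) s) r <= 2 * count is_arc s.
Proof.
move=> r_uniq; elim: s => [|h s IH] /=; first by rewrite count_pred0.
apply: leq_trans (count_orb _ _ _) _.
suff : count (fun v => is_arc h && touches v h) r <= 2 * is_arc h by lia.
case: (boolP (is_arc h)) => /= [ah|_]; last by rewrite count_pred0.
rewrite /touches ah /=; apply: leq_trans (count_orb _ _ _) _.
have one_vertex (x : nat) : count (fun v => x == v) r <= 1.
  by rewrite (eq_count (a2 := pred1 x)) ?count_uniq_mem ?leq_b1 // => v; rewrite /= eq_sym.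
exact: (leq_add (one_vertex _) (one_vertex _)).
Qed.

Lemma count_iota_interval (P : pred nat) N x k : 1 <= x -> x + k <= N + 1 ->
  (forall v, x <= v < x + k -> P v) ->
  k + has (fun v => P v && ~~ (x <= v < x + k)) (iota 1 N) <= count P (iota 1 N).
Proof.
move=> x1 xk Pin.
have -> : iota 1 N = iota 1 (x - 1) ++ iota x k ++ iota (x + k) (N + 1 - (x + k)).
  have x_eq : x = 1 + (x - 1) by lia.
  by rewrite {2 3}x_eq -addnA -!iotaD; congr iota; lia.
rewrite !count_cat !has_cat.
have -> : count P (iota x k) = k.
  rewrite (eq_in_count (a2 := predT)) ?count_predT ?size_iota // => v.
  by rewrite mem_iota => /Pin.
have out_count (m j : nat) :
    has (fun v => P v && ~~ (x <= v < x + k)) (iota m j) <= count P (iota m j).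
  by case: hasP => //= -[v vin /andP [Pv _]]; rewrite -has_count; apply/hasP; exists v.
have in_none : has (fun v => P v && ~~ (x <= v < x + k)) (iota x k) = false.
  by apply/hasP => -[v]; rewrite mem_iota => vin /andP [_]; rewrite vin.
rewrite in_none /=.
by have := out_count 1 (x - 1); have := out_count (x + k) (N + 1 - (x + k)); lia.
Qed.

Section HalfDiagram.
Variables (n l : nat) (D : seq line).
Hypothesis D_half : half_diagram n l D.

Definition arc_vertex (v : nat) : bool := has (fun h => is_arc h && touches v h) D.

Lemma count_touches v : 1 <= v <= n -> count (touches v) D = 1.
Proof.
move=> vn; case/and3P: D_half => _ _ /and4P [/allP touch1 _ _ _].
by apply/eqP/touch1; rewrite mem_iota; lia.
Qed.

Lemma arc_endpoints g : g \in D -> is_arc g -> [&& 1 <= la g, la g < lc g & lc g <= n].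
Proof.
move=> gD; case/and3P: D_half => _ _ /and4P [_ /allP /(_ g gD) /andP [-> ends] _ _].
by rewrite /is_arc; case: (is_prop g) ends.
Qed.

Lemma span_bounds g : g \in D -> is_arc g ->
  [/\ 1 <= span_lo g, span_lo g < span_hi n g & span_hi n g <= n].
Proof.
move=> gD ag; have /and3P [? ? ?] := arc_endpoints gD ag.
by rewrite /span_lo /span_hi; case: (lk g); split; lia.
Qed.

Lemma arc_noncrossing g h : g \in D -> h \in D -> is_arc g -> is_prop h ->
  ~~ (la g < la h < lc g).
Proof.
move=> gD hD ag ph; case/and3P: D_half => _ _ /and4P [_ _ /allP noncross _].
by move: (noncross g gD) => /allP /(_ h hD); rewrite ag ph.
Qed.

Lemma lblob_left g h : g \in D -> h \in D -> lk g = LBlob -> is_prop h -> la g < la h.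
Proof.
move=> gD hD kg ph; case/and3P: D_half => _ _ /and4P [_ _ _ /allP blobs].
by move: (blobs g gD); rewrite kg => /allP /(_ h hD); rewrite ph => /andP [].
Qed.

Lemma rblob_right g h : g \in D -> h \in D -> lk g = RBlob -> is_prop h -> la h < la g.
Proof.
move=> gD hD kg ph; case/and3P: D_half => _ _ /and4P [_ _ _ /allP blobs].
by move: (blobs g gD); rewrite kg => /allP /(_ h hD); rewrite ph => /andP [].
Qed.

Lemma count_arc_vertex : count arc_vertex (iota 1 n) <= 2 * l.
Proof.
by case/and3P: D_half => /eqP <- _ _; apply: count_arc_vertex_le; apply: iota_uniq.
Qed.

Lemma propagating_at v : 1 <= v <= n -> ~~ arc_vertex v ->
  exists2 h, h \in D & is_prop h && (la h == v).
Proof.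
move=> vn not_arc; have /hasP [h hD tvh] : has (touches v) D.
  by rewrite has_count count_touches.
exists h => //; case: (boolP (is_prop h)) => /= ph.
  by move: tvh; rewrite /touches /is_arc ph /= orbF eq_sym.
by case/hasP: not_arc; exists h; rewrite // /is_arc ph.
Qed.

Lemma span_covered g v : g \in D -> is_arc g -> span_lo g <= v <= span_hi n g ->
  arc_vertex v.
Proof.
move=> gD ag vspan; have /and3P [a1 ac cn] := arc_endpoints gD ag.
have vn : 1 <= v <= n by have [] := span_bounds gD ag; lia.
apply/negPn/negP => not_arc; have [h hD /andP [ph /eqP hv]] := propagating_at vn not_arc.
have : ~~ touches v g by apply: contra not_arc => tvg; apply/hasP; exists g; rewrite ?ag.
rewrite /touches ag /= => /norP [/eqP la_v /eqP lc_v].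
have := arc_noncrossing gD hD ag ph; rewrite hv.
move: vspan; rewrite /span_lo /span_hi; case kg: (lk g) => vspan.
- by lia.
- by have := lblob_left gD hD kg ph; lia.
- by have := rblob_right gD hD kg ph; lia.
- by move: ag; rewrite /is_arc /is_prop kg.
Qed.

Lemma covered_interval_le x k : 1 <= x -> x + k <= n + 1 ->
  (forall v, x <= v < x + k -> arc_vertex v) -> k <= 2 * l.
Proof.
move=> x1 xk covered; have := count_iota_interval x1 xk covered.
by have := count_arc_vertex; lia.
Qed.

Lemma covered_interval_maximal x w : 1 <= x -> x + 2 * l <= n + 1 ->
  (forall v, x <= v < x + 2 * l -> arc_vertex v) ->
  1 <= w <= n -> arc_vertex w -> x <= w < x + 2 * l.
Proof.
move=> x1 xk covered wn aw; apply/negPn/negP => w_out.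
have := count_iota_interval x1 xk covered; have := count_arc_vertex.
suff -> : has (fun v => arc_vertex v && ~~ (x <= v < x + 2 * l)) (iota 1 n) by lia.
by apply/hasP; exists w; rewrite ?mem_iota ?aw //; lia.
Qed.

Lemma hook_length_span g : g \in D -> is_arc g ->
  0 < hook_length n g /\ 2 * hook_length n g <= span_hi n g + 1 - span_lo g.
Proof.
move=> gD ag; have /and3P [a1 ac cn] := arc_endpoints gD ag.
rewrite /hook_length /span_lo /span_hi -!divn2.
by move: ag; rewrite /is_arc /is_prop; case: (lk g) => // _; lia.
Qed.

Lemma span_le g : g \in D -> is_arc g -> span_hi n g + 1 - span_lo g <= 2 * l.
Proof.
move=> gD ag; have [lo1 lohi hin] := span_bounds gD ag.
apply: (covered_interval_le lo1); first by lia.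
by move=> v vspan; apply: (span_covered gD ag); lia.
Qed.

Lemma hook_length_le g : g \in D -> is_arc g -> 0 < hook_length n g <= l.
Proof.
by move=> gD ag; have := hook_length_span gD ag; have := span_le gD ag; lia.
Qed.

Lemma critical_span g : g \in D -> critical n l g ->
  span_hi n g + 1 - span_lo g = 2 * l.
Proof.
move=> gD /andP [ag /eqP hook_l].
by have := hook_length_span gD ag; have := span_le gD ag; rewrite hook_l; lia.
Qed.

Lemma critical_span_lo_le g g' : g \in D -> g' \in D -> critical n l g -> critical n l g' ->
  span_lo g <= span_lo g'.
Proof.
move=> gD g'D cg cg'; have [/andP [ag _] /andP [ag' _]] := (cg, cg').
have := critical_span gD cg; have := critical_span g'D cg'.
have [lo1 lohi hin] := span_bounds gD ag; have [lo1' lohi' hin'] := span_bounds g'D ag'.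
move=> span' span; suff : span_lo g <= span_lo g' < span_lo g + 2 * l by case/andP.
apply: (covered_interval_maximal lo1); first by lia.
- by move=> v vspan; apply: (span_covered gD ag); lia.
- by lia.
- by apply: (span_covered g'D ag'); lia.
Qed.

Lemma touches_rem g v : g \in D -> 1 <= v <= n -> touches v g -> ~~ has (touches v) (rem g D).
Proof.
move=> gD vn tvg; have := count_touches vn.
by rewrite has_count count_rem gD tvg => ->.
Qed.

Lemma critical_unique g : 2 * l < n -> g \in D -> critical n l g ->
  ~~ has (critical n l) (rem g D).
Proof.
move=> ln gD cg; apply/hasP => -[g' g'r cg']; have g'D := mem_rem g'r.
have [/andP [ag _] /andP [ag' _]] := (cg, cg').
have same_lo : span_lo g = span_lo g'.
  by apply/eqP; rewrite eqn_leq !critical_span_lo_le.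
have same_hi : span_hi n g = span_hi n g'.
  have [_ lohi _] := span_bounds gD ag; have [_ lohi' _] := span_bounds g'D ag'.
  by have := critical_span gD cg; have := critical_span g'D cg'; lia.
have /and3P [a1 ac cn] := arc_endpoints gD ag.
have shared v : 1 <= v <= n -> touches v g -> touches v g' -> False.
  by move=> vn tvg tvg'; case/hasP: (touches_rem gD vn tvg); exists g'.
(* Both spans consist of all 2l arc endpoints, so g and g' share an endpoint unless one has
   a left and the other a right blob, which would make the span all of 1..n. *)
have [/andP [nL nL'] | /nandP notL] := boolP ((lk g != LBlob) && (lk g' != LBlob)).
  apply: (shared (la g)); first by rewrite a1 (ltnW (leq_trans ac cn)).
    by rewrite /touches eqxx.
  by rewrite -(span_loE nL) same_lo (span_loE nL') /touches eqxx.
have [/andP [nR nR'] | /nandP notR] := boolP ((lk g != RBlob) && (lk g' != RBlob)).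
  apply: (shared (lc g)); first by rewrite cn (ltn_trans a1 ac).
    by rewrite /touches ag eqxx orbT.
  by rewrite -(span_hiE n nR) same_hi (span_hiE n nR') /touches ag' eqxx orbT.
have lo1 : span_lo g = 1.
  by case: notL => /negbNE /eqP kL; [rewrite /span_lo kL | rewrite same_lo /span_lo kL].
have hin : span_hi n g = n.
  by case: notR => /negbNE /eqP kR; [rewrite /span_hi kR | rewrite same_hi /span_hi kR].
have := critical_span gD cg; rewrite lo1 hin addnK => n_eq.
by move: ln; rewrite n_eq ltnn.
Qed.

End HalfDiagram.

Definition blob_diagram (n l : nat) : seq line :=
  [seq Line (2 * i + 1) (2 * i + 2) LBlob | i <- iota 0 l] ++
  [seq Line v (2 * n + 1 - v) Propag | v <- iota (2 * l + 1) (n - 2 * l)].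

Lemma mem_blob_diagram n l g : g \in blob_diagram n l ->
  (exists2 i, i < l & g = Line (2 * i + 1) (2 * i + 2) LBlob) \/
  (exists2 v, 2 * l + 1 <= v <= n & g = Line v (2 * n + 1 - v) Propag).
Proof.
rewrite mem_cat => /orP [/mapP [i]|/mapP [v]]; rewrite mem_iota => hi ->.
  by left; exists i => //; lia.
by right; exists v => //; lia.
Qed.

Lemma count_iota_pair v m k :
  count (fun i => (2 * i + 1 == v) || (2 * i + 2 == v)) (iota m k) =
  (2 * m < v) && (v <= 2 * (m + k)).
Proof.
elim: k m => [|k IH] m /=; first by case: (ltnP (2 * m) v) => /= c; lia.
by rewrite IH; lia.
Qed.

Lemma count_iota_geq v m k : count (fun u => v <= u) (iota m k) = (m + k) - maxn m v.
Proof.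
elim: k m => [|k IH] m /=; first by lia.
by rewrite IH; case: (leqP v m) => c /=; lia.
Qed.

Lemma blob_diagram_half n l : 2 * l < n -> half_diagram n l (blob_diagram n l).
Proof.
move=> ln; rewrite /half_diagram /blob_diagram !count_cat !count_map.
apply/and3P; split.
- rewrite (eq_count (a2 := predT)) ?count_predT ?size_iota //.
  by rewrite (eq_count (a2 := pred0)) ?count_pred0 ?addn0.
- rewrite (eq_count (a2 := pred0)) ?count_pred0 ?add0n //.
  by rewrite (eq_count (a2 := predT)) ?count_predT ?size_iota.
apply/and4P; split.
- apply/allP => v; rewrite mem_iota => vn.
  rewrite count_cat !count_map.
  rewrite (eq_count (a2 := fun i => (2 * i + 1 == v) || (2 * i + 2 == v))) //.
  rewrite count_iota_pair (eq_count (a2 := pred1 v)); last first.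
    by move=> u; rewrite /= /touches /= orbF.
  by rewrite count_uniq_mem ?iota_uniq // mem_iota; apply/eqP; lia.
- rewrite all_cat !all_map; apply/andP; split; apply/allP => v; rewrite mem_iota => vn /=.
    by apply/andP; split; [|apply/andP; split]; lia.
  apply/andP; split; first by lia.
  apply/andP; split; first by lia.
  rewrite count_cat !count_map (eq_count (a2 := pred0)) ?count_pred0 ?add0n //.
  by rewrite (eq_count (a2 := fun u => v <= u)) // count_iota_geq; apply/eqP; lia.
- apply/allP => g /mem_blob_diagram [[i il ->]|[v vn ->]]; apply/allP => h _ //=.
  by case: (is_prop h) => /=; lia.
- apply/allP => g /mem_blob_diagram [[i il ->]|[v vn ->]] //=.
  apply/allP => h /mem_blob_diagram [[j jl ->]|[u un ->]] /=; rewrite /encloses /=.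
    by apply/negP => /andP [h1 h2]; lia.
  by rewrite andbT; lia.
Qed.

Lemma blob_diagram_critical n l : 0 < l -> has (critical n l) (blob_diagram n l).
Proof.
move=> l_gt0; apply/hasP; exists (Line (2 * l.-1 + 1) (2 * l.-1 + 2) LBlob).
  by rewrite mem_cat map_f // mem_iota; lia.
by rewrite /critical /hook_length /= -!divn2; apply/eqP; lia.
Qed.

Local Open Scope ring_scope.

Lemma subf_div (F : fieldType) (x1 y1 x2 y2 : F) : y1 != 0 -> y2 != 0 ->
  x1 / y1 - x2 / y2 = (x1 * y2 - x2 * y1) / (y1 * y2).
Proof. by move=> y1_neq0 y2_neq0; rewrite -mulNr addf_div // mulNr. Qed.

Section Specialization.
Variables (k : fieldType) (p : 'I_3 -> k).
Local Notation "f ~> x" := (specializes_to f p x) (at level 70).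
Local Notation tofrac P := (FracField.tofrac P : ratfun k).

Lemma specializes_tofrac (P : {mpoly k[3]}) : tofrac P ~> P.@[p].
Proof. by exists P, 1; rewrite rmorph1 oner_neq0 tofrac1 !divr1. Qed.

Lemma specializes1 : 1 ~> 1.
Proof. by rewrite -tofrac1 -(rmorph1 (meval p)); apply: specializes_tofrac. Qed.

Lemma specializes_var i : var k i ~> p (inord i).
Proof. by have := specializes_tofrac 'X_(inord i); rewrite mevalXU. Qed.

Lemma specializesM f g x y : f ~> x -> g ~> y -> f * g ~> x * y.
Proof.
move=> [P1 [R1 [R1p [-> ->]]]] [P2 [R2 [R2p [-> ->]]]].
exists (P1 * P2), (R1 * R2); rewrite !mevalM mulf_neq0 // !tofracM !invfM.
by split=> //; split; rewrite mulrACA.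
Qed.

Lemma specializesV f x : f ~> x -> x != 0 -> f^-1 ~> x^-1.
Proof.
move=> [P [R [Rp [-> ->]]]] x_neq0; exists R, P; rewrite !invf_div; split=> //.
by apply: contraNneq x_neq0 => ->; rewrite mul0r.
Qed.

Lemma specializesN f x : f ~> x -> - f ~> - x.
Proof.
move=> [P [R [Rp [-> ->]]]]; exists (- P), R.
by rewrite mevalN -[- P]sub0r tofracB tofrac0 sub0r !mulNr.
Qed.

Lemma specializesB f g x y : f ~> x -> g ~> y -> f - g ~> x - y.
Proof.
move=> [P1 [R1 [R1p [-> ->]]]] [P2 [R2 [R2p [-> ->]]]].
have tofrac_neq0 (R : {mpoly k[3]}) : R.@[p] != 0 -> tofrac R != 0.
  by move=> Rp; rewrite tofrac_eq0; apply: contraNneq Rp => ->; rewrite rmorph0.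
exists (P1 * R2 - P2 * R1), (R1 * R2).
rewrite !mevalB !mevalM mulf_neq0 //; split=> //; split; last exact: subf_div.
by rewrite tofracB !tofracM; apply: (@subf_div (ratfun k)); apply: tofrac_neq0.
Qed.

Lemma specializesXz f x (z : int) : f ~> x -> x != 0 -> f ^ z ~> x ^ z.
Proof.
move=> fx x_neq0; have fxn m : f ^+ m ~> x ^+ m.
  elim: m => [|m IH]; first by rewrite !expr0; apply: specializes1.
  by rewrite !exprS; apply: specializesM.
case: z => m; first exact: fxn.
by apply: specializesV; [exact: fxn | rewrite expf_neq0].
Qed.

Lemma specializes_div f g x y : f ~> x -> g ~> y -> y != 0 -> f / g ~> x / y.
Proof. by move=> fx gy y_neq0; apply: specializesM; last apply: specializesV. Qed.

Definition defined_at (f : ratfun k) : Prop := exists x, f ~> x.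
Definition invertible_at (f : ratfun k) : Prop := exists2 x, f ~> x & x != 0.

Lemma invertible_at1 : invertible_at 1.
Proof. by exists 1; [apply: specializes1 | apply: oner_neq0]. Qed.

Lemma invertible_atM f g : invertible_at f -> invertible_at g -> invertible_at (f * g).
Proof.
by move=> [x fx x_neq0] [y gy y_neq0]; exists (x * y); [apply: specializesM | apply: mulf_neq0].
Qed.

Lemma invertible_atV f : invertible_at f -> invertible_at f^-1.
Proof. by move=> [x fx x_neq0]; exists x^-1; [apply: specializesV | rewrite invr_eq0]. Qed.

Lemma invertible_at_prod (I : Type) (r : seq I) (P : pred I) (F : I -> ratfun k) :
  (forall i, P i -> invertible_at (F i)) -> invertible_at (\prod_(i <- r | P i) F i).
Proof.
move=> FP; apply: big_ind => //; last exact: invertible_atM.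
exact: invertible_at1.
Qed.

Lemma defined_atM f g : defined_at f -> defined_at g -> defined_at (f * g).
Proof. by move=> [x fx] [y gy]; exists (x * y); apply: specializesM. Qed.

Lemma defined_at_div f g : defined_at f -> invertible_at g -> defined_at (f / g).
Proof. by move=> [x fx] [y gy y_neq0]; exists (x / y); apply: specializes_div. Qed.

End Specialization.

Lemma subr_inv_neq0 (F : fieldType) (y : F) : y != 0 -> y ^+ 2 != 1 -> y - y^-1 != 0.
Proof. by move=> y_neq0; apply: contra; rewrite subr_eq0 expr2 => /eqP {2}->; rewrite mulfV. Qed.

Lemma expz_subr_opp_neq0 (F : fieldType) (y : F) (m : nat) :
  y != 0 -> y ^+ (m * 2) != 1 -> y ^ m%:Z - y ^ (- m%:Z) != 0.
Proof.
move=> y_neq0 y2m; rewrite -invr_expz; apply: subr_inv_neq0; first exact: expf_neq0.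
by rewrite -exprM.
Qed.

Definition qint_at (k : fieldType) (q : k) (x : int) : k := (q ^ x - q ^ (- x)) / (q - q^-1).
Definition qwint_at (k : fieldType) (q Q : k) (x : int) : k :=
  (Q * q ^ x - Q^-1 * q ^ (- x)) / (q - q^-1).

Section RootOfUnity.
Variables (k : fieldType) (l : nat) (q : k).
Hypotheses (l_gt1 : (1 < l)%N) (q_prim : (2 * l)%N.-primitive_root q).

Lemma prim_root_neq0 : q != 0.
Proof.
apply/eqP => q0; have := prim_expr_order q_prim; rewrite q0 expr0n muln_eq0 /=.
by rewrite gtn_eqF ?(ltn_trans _ l_gt1) // => /eqP; rewrite eq_sym oner_eq0.
Qed.

Lemma prim_root_sub_inv_neq0 : q - q^-1 != 0.
Proof.
by rewrite subr_inv_neq0 ?prim_root_neq0 // -(prim_order_dvd q_prim) gtnNdvd //; lia.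
Qed.

Lemma qint_at_neq0 (m : nat) : ~~ (l %| m)%N -> qint_at q m != 0.
Proof.
move=> l_ndvd_m; rewrite mulf_neq0 ?invr_eq0 ?prim_root_sub_inv_neq0 //.
rewrite expz_subr_opp_neq0 ?prim_root_neq0 // -(prim_order_dvd q_prim).
by rewrite [(2 * l)%N]mulnC dvdn_pmul2r.
Qed.

Lemma qwint_at_neq0 (Q : k) (x : int) : nonintegral q Q -> qwint_at q Q x != 0.
Proof.
move=> [Q_neq0 Q_notpow]; have q_neq0 := prim_root_neq0.
rewrite mulf_neq0 ?invr_eq0 ?prim_root_sub_inv_neq0 //.
have -> : Q^-1 * q ^ (- x) = (Q * q ^ x)^-1 by rewrite invfM -invr_expz mulrC.
have Q_eq : Q = (Q * q ^ x) * q ^ (- x) by rewrite -invr_expz mulfK ?expfz_neq0.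
rewrite subr_inv_neq0 ?mulf_neq0 ?expfz_neq0 // sqrf_eq1.
case: (Q_notpow (- x)) => Q_ne Q_neN; apply/norP; split.
  by apply: contra Q_ne => /eqP e; rewrite {1}Q_eq e mul1r.
by apply: contra Q_neN => /eqP e; rewrite {1}Q_eq e mulN1r.
Qed.

End RootOfUnity.

Section RationalQuantumInteger.
Variable k : fieldType.

Lemma qv_neq0 : qv k != 0.
Proof.
rewrite /qv /var tofrac_eq0; apply/eqP => /(congr1 (meval (fun _ => 1 : k))).
by rewrite rmorph0 mevalXU => /eqP; rewrite oner_eq0.
Qed.

Lemma qv_expn_neq1 (j : nat) : (0 < j)%N -> qv k ^+ j != 1.
Proof.
move=> j_gt0; rewrite /qv /var -tofracXn -tofrac1 tofrac_eq.
apply/eqP => /(congr1 (meval (fun _ => 0 : k))).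
rewrite rmorphXn rmorph1 /= mevalXU expr0n gtn_eqF //= => /eqP.
by rewrite eq_sym oner_eq0.
Qed.

Lemma qint_neq0 (m : nat) : (0 < m)%N -> qint k m != 0.
Proof.
move=> m_gt0; apply: mulf_neq0.
  apply: (@expz_subr_opp_neq0 (ratfun k)); first exact: qv_neq0.
  by rewrite qv_expn_neq1 // muln_gt0 m_gt0.
apply: invr_neq0; apply: (@subr_inv_neq0 (ratfun k)); first exact: qv_neq0.
exact: qv_expn_neq1.
Qed.

Lemma qfactS (j : nat) : qfact k j.+1 = qfact k j * qint k j.+1.
Proof. by rewrite /qfact big_ord_recr. Qed.

End RationalQuantumInteger.

Definition hook_weight (k : fieldType) (n l : nat) (g : line) : ratfun k :=
  let a := la g in let b := (lc g - a - 1)./2 in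
  match lk g with
  | Undec => 1
  | Propag => if ((a - 1) %% (4 * l) < 2 * l)%N then 1 else -1
  | LBlob => qwint (Q1v k) (- ((a - 1)./2)%:Z)
  | RBlob => qwint (Q2v k) (- ((n - (a + 2 * b + 1))./2)%:Z)
  end.

Lemma h3_lineE (k : fieldType) (n l : nat) (g : line) :
  h3_line k n l g =
  (if is_prop g then 1 else qint k (hook_length n g)) * hook_weight k n l g.
Proof. by case: g => a c []; rewrite /h3_line /hook_weight /= ?mulr1 ?mul1r. Qed.

Section HookFactors.
Variables (k : fieldType) (n l : nat) (q Q1 Q2 : k).
Hypotheses (l_gt1 : (1 < l)%N) (q_prim : (2 * l)%N.-primitive_root q).
Hypotheses (Q1_nonint : nonintegral q Q1) (Q2_nonint : nonintegral q Q2).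
Local Notation p := (point q Q1 Q2).
Local Notation "f ~> x" := (specializes_to f p x) (at level 70).

Let q_neq0 : q != 0 := prim_root_neq0 l_gt1 q_prim.
Let q_sub_inv_neq0 : q - q^-1 != 0 := prim_root_sub_inv_neq0 l_gt1 q_prim.

Lemma specializes_point_var (i : 'I_3) : var k i ~> nth 0 [:: q; Q1; Q2] i.
Proof. by have := specializes_var p i; rewrite inord_val. Qed.

Lemma specializes_qint (x : int) : qint k x ~> qint_at q x.
Proof.
have qv_q : qv k ~> q := specializes_point_var ord0.
apply: specializes_div; last exact: q_sub_inv_neq0.
  by apply: specializesB; apply: specializesXz.
by apply: specializesB; last apply: specializesV.
Qed.

Lemma specializes_qwint (Qv : ratfun k) (Q : k) (x : int) :
  Qv ~> Q -> Q != 0 -> qwint Qv x ~> qwint_at q Q x.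
Proof.
move=> Qv_Q Q_neq0; have qv_q : qv k ~> q := specializes_point_var ord0.
apply: specializes_div; last exact: q_sub_inv_neq0.
  by apply: specializesB; apply: specializesM;
    first [exact: specializesV | exact: specializesXz | done].
by apply: specializesB; last apply: specializesV.
Qed.

Lemma invertible_qint (m : nat) : ~~ (l %| m)%N -> invertible_at p (qint k m).
Proof.
move=> l_ndvd_m; exists (qint_at q m); first exact: specializes_qint.
exact: qint_at_neq0 l_gt1 q_prim _ l_ndvd_m.
Qed.

Lemma invertible_qwint (Qv : ratfun k) (Q : k) (x : int) :
  Qv ~> Q -> nonintegral q Q -> invertible_at p (qwint Qv x).
Proof.
move=> Qv_Q Q_nonint; exists (qwint_at q Q x).
  by apply: specializes_qwint => //; case: Q_nonint.
exact: qwint_at_neq0 l_gt1 q_prim _ _ Q_nonint.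
Qed.

Lemma invertible_qwfall (Qv : ratfun k) (Q : k) (j : nat) :
  Qv ~> Q -> nonintegral q Q -> invertible_at p (qwfall Qv j).
Proof.
by move=> Qv_Q Q_nonint; apply: invertible_at_prod => i _; exact: invertible_qwint Qv_Q Q_nonint.
Qed.

Lemma invertible_qfact (j : nat) : (j < l)%N -> invertible_at p (qfact k j).
Proof.
move=> j_lt_l; apply: invertible_at_prod => i _; apply: invertible_qint.
by rewrite gtnNdvd // (leq_ltn_trans _ j_lt_l).
Qed.

Lemma invertible_hook_weight (g : line) : invertible_at p (hook_weight k n l g).
Proof.
rewrite /hook_weight; case: (lk g); try exact: invertible_at1.
- exact: invertible_qwint (specializes_point_var 1) Q1_nonint.
- exact: invertible_qwint (specializes_point_var 2) Q2_nonint.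
case: ifP => _; first exact: invertible_at1.
exists (-1); last by rewrite oppr_eq0 oner_neq0.
by apply: specializesN; apply: specializes1.
Qed.

Lemma invertible_h3_line (g : line) :
  (is_arc g -> ~~ (l %| hook_length n g)%N) -> invertible_at p (h3_line k n l g).
Proof.
move=> arc_ndvd; rewrite h3_lineE; apply: invertible_atM (invertible_hook_weight g).
case: ifP => [_ | /negbT /arc_ndvd]; [exact: invertible_at1 | exact: invertible_qint].
Qed.

Hypothesis n_gt : (2 * l < n)%N.
Variables (D : seq line).
Hypothesis D_half : half_diagram n l D.

Lemma invertible_h3_line_noncritical g : g \in D -> ~~ critical n l g ->
  invertible_at p (h3_line k n l g).
Proof.
move=> gD g_noncrit; apply: invertible_h3_line => // ag.
have /andP [hook_gt0 hook_le] := hook_length_le D_half gD ag.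
rewrite gtnNdvd // ltn_neqAle hook_le andbT.
by move: g_noncrit; rewrite /critical ag.
Qed.

Let l_gt0 : (0 < l)%N := ltnW l_gt1.

Let reduced_numerator : ratfun k := qfact k l.-1 * qwfall (Q1v k) l * qwfall (Q2v k) l.

Lemma invertible_reduced_numerator : invertible_at p reduced_numerator.
Proof.
apply: invertible_atM; last exact: invertible_qwfall (specializes_point_var 2) Q2_nonint.
apply: invertible_atM; last exact: invertible_qwfall (specializes_point_var 1) Q1_nonint.
by apply: invertible_qfact; rewrite prednK.
Qed.

Lemma h3_numeratorE :
  qfact k l * qwfall (Q1v k) l * qwfall (Q2v k) l = reduced_numerator * qint k l.
Proof.
have l_eq : l = l.-1.+1 by rewrite prednK.
by rewrite [in LHS]l_eq qfactS -l_eq !(mulrAC _ (qint k l)).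
Qed.

Lemma invertible_h3_critical : has (critical n l) D -> invertible_at p (h3 k n l D).
Proof.
move=> /hasP [g gD /[dup] g_crit /andP [ag /eqP hook_l]].
set rest := \prod_(h <- rem g D) h3_line k n l h.
have rest_inv : invertible_at p rest.
  rewrite /rest big_seq_cond; apply: invertible_at_prod => h /andP [hr _].
  apply: invertible_h3_line_noncritical; first exact: mem_rem hr.
  by apply: contra (critical_unique D_half n_gt gD g_crit) => h_crit; apply/hasP; exists h.
have -> : h3 k n l D =
    reduced_numerator * qint k l / (qint k l * (hook_weight k n l g * rest)).
  rewrite /h3 h3_numeratorE (perm_big _ (perm_to_rem gD)) big_cons h3_lineE.
  by rewrite (negbTE ag) hook_l mulrA.
rewrite invfM mulrA (@mulfK (ratfun k)) ?qint_neq0 //.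
apply: invertible_atM; first exact: invertible_reduced_numerator.
by apply: invertible_atV; apply: invertible_atM rest_inv; apply: invertible_hook_weight.
Qed.

Lemma defined_h3 : defined_at p (h3 k n l D).
Proof.
have [crit | no_crit] := boolP (has (critical n l) D).
  by have [x hx _] := invertible_h3_critical crit; exists x.
apply: defined_at_div.
  rewrite h3_numeratorE; have [x hx _] := invertible_reduced_numerator.
  by apply: defined_atM; [exists x | exists (qint_at q l); apply: specializes_qint].
rewrite big_seq_cond; apply: invertible_at_prod => g /andP [gD _].
by apply: invertible_h3_line_noncritical => //; apply: (hasPn no_crit).
Qed.

End HookFactors.

Theorem lemma4p3p1 (k : fieldType) (n l : nat) (q Q1 Q2 : k) :
  (2 * l < n)%N -> (6 <= 2 * l)%N ->
  (2 * l)%N.-primitive_root q ->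
  nonintegral q Q1 -> nonintegral q Q2 ->
  (forall D : seq line, half_diagram n l D ->
     exists x : k, specializes_to (h3 k n l D) (point q Q1 Q2) x) /\
  (exists (D : seq line) (x : k), half_diagram n l D /\
     specializes_to (h3 k n l D) (point q Q1 Q2) x /\ x != 0).
Proof.
move=> n_gt l_ge3 q_prim Q1_nonint Q2_nonint.
have l_gt1 : (1 < l)%N by lia.
split=> [D D_half | ]; first exact: defined_h3.
have D_half := blob_diagram_half n_gt.
have [x hx x_neq0] := invertible_h3_critical l_gt1 q_prim Q1_nonint Q2_nonint n_gt D_half
  (blob_diagram_critical n (ltnW l_gt1)).
by exists (blob_diagram n l), x.
Qed.
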